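(* The spaces $T(\mathbf I)$ and $\overline{T(\mathbf I)}$ are topologically complete (completely metrizable).
   Context: $\mathbf I=[0,1]$; $C(\mathbf I)$ is the space of continuous self-maps of $\mathbf I$ with the supremum metric; $T(\mathbf I)$ is the set of transitive maps ($f$ is transitive if for all non-empty open $U,V\subset\mathbf I$ there is $n\ge1$ with $U\cap f^{-n}(V)\ne\emptyset$) and $\overline{T(\mathbf I)}$ its closure in $C(\mathbf I)$. *)

From Stdlib Require Import Reals Lra.
Open Scope R_scope.

Definition inI (x : R) : Prop := 0 <= x <= 1.

(* f : R -> R represents a self-map of I (values outside I are irrelevant);
   f is in C(I) iff it maps I into I and is continuous on I. *)
Definition inC (f : R -> R) : Prop :=
  (forall x, inI x -> inI (f x)) /\
  (forall x, inI x -> forall eps, 0 < eps ->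
     exists delta, 0 < delta /\
       forall y, inI y -> Rabs (y - x) < delta -> Rabs (f y - f x) < eps).

Definition openI (U : R -> Prop) : Prop :=
  (forall x, U x -> inI x) /\
  (forall x, U x -> exists r, 0 < r /\
     forall y, inI y -> Rabs (y - x) < r -> U y).

Definition transitive (f : R -> R) : Prop :=
  forall U V : R -> Prop, openI U -> openI V ->
    (exists x, U x) -> (exists y, V y) ->
    exists n : nat, (1 <= n)%nat /\ exists x, U x /\ V (Nat.iter n f x).

Definition TI (f : R -> R) : Prop := inC f /\ transitive f.

Definition sup_close (f g : R -> R) (eps : R) : Prop :=
  forall x, inI x -> Rabs (f x - g x) <= eps.

Definition TI_closure (f : R -> R) : Prop :=
  inC f /\ forall eps, 0 < eps -> exists g, TI g /\ sup_close f g eps.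

(* Functions are identified when they agree on I. *)
Definition eqI (f g : R -> R) : Prop := forall x, inI x -> f x = g x.

Definition completely_metrizable (S : (R -> R) -> Prop) : Prop :=
  exists d : (R -> R) -> (R -> R) -> R,
    (forall f g, S f -> S g -> 0 <= d f g) /\
    (forall f g, S f -> S g -> (d f g = 0 <-> eqI f g)) /\
    (forall f g, S f -> S g -> d f g = d g f) /\
    (forall f g h, S f -> S g -> S h -> d f h <= d f g + d g h) /\
    (forall f, S f -> forall eps, 0 < eps -> exists delta, 0 < delta /\
        forall g, S g -> sup_close f g delta -> d f g < eps) /\
    (forall f, S f -> forall eps, 0 < eps -> exists delta, 0 < delta /\
        forall g, S g -> d f g < delta -> sup_close f g eps) /\
    (forall u : nat -> (R -> R), (forall n, S (u n)) ->
       (forall eps, 0 < eps -> exists N, forall m n, (N <= m)%nat -> (N <= n)%nat ->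
           d (u m) (u n) < eps) ->
       exists g, S g /\ forall eps, 0 < eps -> exists N, forall n, (N <= n)%nat ->
           d (u n) g < eps).

From Stdlib Require Import Reals Lra Lia Classical ClassicalEpsilon Cantor.
From Coquelicot Require Import Rcomplements.
Open Scope R_scope.

(* C(I) is complete for the sup metric, so its closed subset \overline{T(I)} is complete
   for the sup metric itself.  T(I) is a G_delta: f is transitive iff for every pair
   (U_k, V_k) of basic balls with rational data some iterate of f maps a point of U_k into
   V_k, and each of these conditions is open because f |-> f^n(x) is continuous.  On a
   G_delta  S = /\_k O_k  of C(I) one uses Alexandroff's metric
     d(f, g) = |f - g|_oo + sup_k min(1, |1/rho_k f - 1/rho_k g|) / (k + 1),
   where rho_k f in (0, 1] is the largest radius of a ball around f contained in O_k.
   It induces the sup topology, and along a d-Cauchy sequence 1/rho_k stays bounded, so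
   the uniform limit keeps a ball inside every O_k and lies in S. *)

Definition Sup (P : R -> Prop) : R :=
  match excluded_middle_informative (bound P /\ exists x, P x) with
  | left H => proj1_sig (completeness P (proj1 H) (proj2 H))
  | right _ => 0
  end.

Lemma Sup_is_lub P B : (exists x, P x) -> (forall x, P x -> x <= B) -> is_lub P (Sup P).
Proof.
  intros Hne HB. unfold Sup.
  destruct (excluded_middle_informative _) as [H|H].
  - exact (proj2_sig (completeness P (proj1 H) (proj2 H))).
  - exfalso; apply H; split; [exists B; exact HB | exact Hne].
Qed.

Lemma Sup_ub P B r : (forall x, P x -> x <= B) -> P r -> r <= Sup P.
Proof. intros HB Hr. apply (Sup_is_lub P B); eauto. Qed.

Lemma Sup_le P B : (exists x, P x) -> (forall x, P x -> x <= B) -> Sup P <= B.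
Proof. intros Hne HB. apply (Sup_is_lub P B); auto. Qed.

Lemma Sup_lt P B a : (exists x, P x) -> (forall x, P x -> x <= B) ->
  a < Sup P -> exists r, P r /\ a < r.
Proof.
  intros Hne HB Ha. apply NNPP; intro Hno.
  assert (Sup P <= a).
  { apply Sup_le; auto. intros x Hx. apply Rnot_lt_le. intro; apply Hno; eauto. }
  lra.
Qed.

Definition dsup (f g : R -> R) : R :=
  Sup (fun r => exists x, inI x /\ r = Rabs (f x - g x)).

Lemma inC_Rabs_sub_le1 f g x : inC f -> inC g -> inI x -> Rabs (f x - g x) <= 1.
Proof.
  intros [Hf _] [Hg _] Hx. apply Rabs_le_between.
  destruct (Hf x Hx), (Hg x Hx). lra.
Qed.

Lemma dsup_ub f g x : inC f -> inC g -> inI x -> Rabs (f x - g x) <= dsup f g.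
Proof.
  intros Hf Hg Hx. apply Sup_ub with 1; [|eauto].
  intros r [y [Hy ->]]. apply inC_Rabs_sub_le1; auto.
Qed.

Lemma dsup_le f g B : sup_close f g B -> dsup f g <= B.
Proof.
  intros H. apply Sup_le.
  - exists (Rabs (f 0 - g 0)), 0. split; [unfold inI; lra | reflexivity].
  - intros r [y [Hy ->]]. auto.
Qed.

Lemma dsup_nonneg f g : inC f -> inC g -> 0 <= dsup f g.
Proof.
  intros Hf Hg. apply Rle_trans with (Rabs (f 0 - g 0)); [apply Rabs_pos|].
  apply dsup_ub; auto. unfold inI; lra.
Qed.

Lemma sup_close_of_dsup_le f g eps : inC f -> inC g -> dsup f g <= eps -> sup_close f g eps.
Proof. intros Hf Hg H x Hx. apply Rle_trans with (dsup f g); auto. apply dsup_ub; auto. Qed.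

Lemma sup_close_sym f g eps : sup_close f g eps -> sup_close g f eps.
Proof. intros H x Hx. rewrite Rabs_minus_sym. auto. Qed.

Lemma sup_close_triangle f g h a b :
  sup_close f g a -> sup_close g h b -> sup_close f h (a + b).
Proof.
  intros Hfg Hgh x Hx. apply Rle_trans with (Rabs (f x - g x) + Rabs (g x - h x)).
  - apply (Rdist_tri (f x) (h x) (g x)).
  - apply Rplus_le_compat; auto.
Qed.

Lemma dsup_sym f g : inC f -> inC g -> dsup f g = dsup g f.
Proof.
  intros Hf Hg. apply Rle_antisym; apply dsup_le, sup_close_sym, sup_close_of_dsup_le;
  auto using Rle_refl.
Qed.

Lemma dsup_triangle f g h : inC f -> inC g -> inC h -> dsup f h <= dsup f g + dsup g h.
Proof.
  intros Hf Hg Hh. apply dsup_le, sup_close_triangle with g;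
  apply sup_close_of_dsup_le; auto using Rle_refl.
Qed.

Lemma dsup_eq0 f g : inC f -> inC g -> (dsup f g = 0 <-> eqI f g).
Proof.
  intros Hf Hg. split.
  - intros H x Hx. pose proof (dsup_ub f g x Hf Hg Hx) as Hle. rewrite H in Hle.
    apply Rminus_diag_uniq, Rabs_eq_0. pose proof (Rabs_pos (f x - g x)). lra.
  - intros H. apply Rle_antisym; [|apply dsup_nonneg; auto].
    apply dsup_le. intros x Hx. rewrite H, Rminus_diag, Rabs_R0 by auto. lra.
Qed.

Definition cauchy (d : (R -> R) -> (R -> R) -> R) (u : nat -> R -> R) : Prop :=
  forall eps, 0 < eps -> exists N, forall m n, (N <= m)%nat -> (N <= n)%nat ->
    d (u m) (u n) < eps.

Definition converges (d : (R -> R) -> (R -> R) -> R) (u : nat -> R -> R) (g : R -> R) : Prop :=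
  forall eps, 0 < eps -> exists N, forall n, (N <= n)%nat -> d (u n) g < eps.

Definition cv_unif (u : nat -> R -> R) (g : R -> R) : Prop :=
  forall eps, 0 < eps -> exists N, forall n, (N <= n)%nat -> sup_close (u n) g eps.

Lemma cv_unif_converges_dsup u g : cv_unif u g -> converges dsup u g.
Proof.
  intros Hcv eps He. destruct (Hcv (eps / 2)) as [N HN]; [lra|].
  exists N. intros n Hn. pose proof (dsup_le _ _ _ (HN n Hn)). lra.
Qed.

Section CompletenessOfC.

Variable u : nat -> R -> R.
Hypothesis u_inC : forall n, inC (u n).
Hypothesis u_cauchy : cauchy dsup u.

Lemma cauchy_pointwise_limit :
  exists g, forall x, inI x -> Un_cv (fun n => u n x) (g x).
Proof.
  apply choice with (R := fun x l => inI x -> Un_cv (fun n => u n x) l).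
  intros x. destruct (classic (inI x)) as [Hx|Hx]; [|exists 0; tauto].
  assert (Hcx : Cauchy_crit (fun n => u n x)).
  { intros eps He. destruct (u_cauchy eps He) as [N HN]. exists N. intros m n Hm Hn.
    eapply Rle_lt_trans; [apply dsup_ub; auto | apply HN; auto]. }
  destruct (R_complete _ Hcx) as [l Hl]. exists l. auto.
Qed.

Lemma cauchy_cv_unif g : (forall x, inI x -> Un_cv (fun n => u n x) (g x)) -> cv_unif u g.
Proof.
  intros Hg eps He. destruct (u_cauchy eps He) as [N HN].
  exists N. intros n Hn x Hx. apply Rnot_lt_le; intro Hlt.
  destruct (Hg x Hx (Rabs (u n x - g x) - eps)) as [M HM]; [lra|].
  set (m := max N M).
  pose proof (HM m ltac:(lia)) as Hm. unfold Rdist in Hm.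
  pose proof (dsup_ub (u n) (u m) x (u_inC n) (u_inC m) Hx).
  pose proof (HN n m Hn ltac:(lia)).
  pose proof (Rdist_tri (u n x) (g x) (u m x)). unfold Rdist in *. lra.
Qed.

Lemma cv_unif_inC g : cv_unif u g -> inC g.
Proof.
  intros Hcv. split.
  - intros x Hx.
    assert (Hnear : forall eps, 0 < eps -> - eps <= g x <= 1 + eps).
    { intros eps He. destruct (Hcv eps He) as [N HN].
      pose proof (HN N (le_n N) x Hx) as Hd. apply Rabs_le_between in Hd.
      destruct (proj1 (u_inC N) x Hx). lra. }
    split; apply le_epsilon; intros eps He; specialize (Hnear eps He); lra.
  - intros x Hx eps He.
    destruct (Hcv (eps / 4)) as [N HN]; [lra|].
    destruct (proj2 (u_inC N) x Hx (eps / 4)) as [del [Hdel Hcont]]; [lra|].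
    exists del. split; auto. intros y Hy Hyx.
    specialize (Hcont y Hy Hyx). apply Rabs_lt_between in Hcont.
    pose proof (HN N (le_n N) x Hx) as Hux. pose proof (HN N (le_n N) y Hy) as Huy.
    apply Rabs_le_between in Hux, Huy. apply Rabs_lt_between. lra.
Qed.

Lemma C_complete : exists g, inC g /\ cv_unif u g.
Proof.
  destruct cauchy_pointwise_limit as [g Hg].
  exists g. split; [apply cv_unif_inC|]; apply cauchy_cv_unif; exact Hg.
Qed.

End CompletenessOfC.

Definition closedC (S : (R -> R) -> Prop) : Prop :=
  forall f, inC f -> (forall eps, 0 < eps -> exists g, S g /\ sup_close f g eps) -> S f.

Lemma closed_completely_metrizable S :
  (forall f, S f -> inC f) -> closedC S -> completely_metrizable S.
Proof.
  intros HSC HS. exists dsup. repeat match goal with |- _ /\ _ => split end.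
  - intros f g Hf Hg. apply dsup_nonneg; auto.
  - intros f g Hf Hg. apply dsup_eq0; auto.
  - intros f g Hf Hg. apply dsup_sym; auto.
  - intros f g h Hf Hg Hh. apply dsup_triangle; auto.
  - intros f Hf eps He. exists (eps / 2). split; [lra|].
    intros g Hg Hfg. apply dsup_le in Hfg. lra.
  - intros f Hf eps He. exists eps. split; [lra|].
    intros g Hg Hfg. apply sup_close_of_dsup_le; auto; lra.
  - intros u Hu Hc.
    assert (HuC : forall n, inC (u n)) by auto.
    destruct (C_complete u HuC Hc) as [g [Hg Hcv]].
    exists g. split; [|apply cv_unif_converges_dsup; exact Hcv].
    apply HS; auto. intros eps He. destruct (Hcv eps He) as [N HN].
    exists (u N). split; auto. apply sup_close_sym; auto.
Qed.

Definition openC (O : (R -> R) -> Prop) : Prop :=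
  forall f, inC f -> O f -> exists r, 0 < r /\ forall h, inC h -> dsup f h < r -> O h.

Definition ball_inside (O : (R -> R) -> Prop) (f : R -> R) (r : R) : Prop :=
  0 <= r <= 1 /\ forall h, inC h -> dsup f h < r -> O h.

Definition radius (O : (R -> R) -> Prop) (f : R -> R) : R := Sup (ball_inside O f).

Section Radius.

Variable O : (R -> R) -> Prop.

Lemma ball_inside_0 f : inC f -> ball_inside O f 0.
Proof.
  intros Hf. split; [lra|]. intros h Hh Hfh. pose proof (dsup_nonneg f h Hf Hh). lra.
Qed.

Lemma ball_inside_le1 f r : ball_inside O f r -> r <= 1.
Proof. intros [Hr _]. apply Hr. Qed.

Lemma radius_nonneg f : inC f -> 0 <= radius O f.
Proof. intros Hf. apply Sup_ub with 1; [exact (ball_inside_le1 f) | apply ball_inside_0; auto]. Qed.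

Lemma radius_mem f : inC f -> 0 < radius O f -> O f.
Proof.
  intros Hf Hpos.
  destruct (Sup_lt _ 1 0 (ex_intro _ 0 (ball_inside_0 f Hf)) (ball_inside_le1 f) Hpos)
    as [r [[_ Hr] Hr0]].
  apply Hr; auto. rewrite (proj2 (dsup_eq0 f f Hf Hf)); [exact Hr0 | intros x _; reflexivity].
Qed.

Lemma radius_pos f : openC O -> inC f -> O f -> 0 < radius O f.
Proof.
  intros HO Hf Hfo. destruct (HO f Hf Hfo) as [r [Hr Hball]].
  apply Rlt_le_trans with (Rmin r 1); [apply Rmin_pos; lra|].
  apply Sup_ub with 1; [exact (ball_inside_le1 f)|]. split.
  - split; [apply Rlt_le, Rmin_pos; lra | apply Rmin_r].
  - intros h Hh Hfh. apply Hball; auto. pose proof (Rmin_l r 1). lra.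
Qed.

Lemma radius_lipschitz f g : inC f -> inC g -> radius O f <= radius O g + dsup f g.
Proof.
  intros Hf Hg. apply Sup_le; [exists 0; apply ball_inside_0; auto|].
  intros r [Hr Hball].
  destruct (Rle_dec r (dsup f g)) as [Hle|Hgt].
  - pose proof (radius_nonneg g Hg). lra.
  - assert (ball_inside O g (r - dsup f g)).
    { pose proof (dsup_nonneg f g Hf Hg). split; [lra|].
      intros h Hh Hgh. apply Hball; auto. pose proof (dsup_triangle f g h Hf Hg Hh). lra. }
    assert (r - dsup f g <= radius O g) by (apply Sup_ub with 1; auto; exact (ball_inside_le1 g)).
    lra.
Qed.

Lemma radius_cv_unif_mem u g N m : inC g -> (forall n, inC (u n)) -> cv_unif u g -> 0 < m ->
  (forall n, (N <= n)%nat -> m <= radius O (u n)) -> O g.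
Proof.
  intros Hg HuC Hcv Hm HN.
  destruct (Hcv (m / 2)) as [N' HN']; [lra|].
  set (n := max N N').
  pose proof (radius_lipschitz (u n) g (HuC n) Hg).
  pose proof (dsup_le _ _ _ (HN' n ltac:(lia))).
  pose proof (HN n ltac:(lia)).
  apply radius_mem; auto. lra.
Qed.

End Radius.

Lemma Rabs_inv_sub_le m a b : 0 < m -> m <= a -> m / 2 <= b ->
  Rabs (/ a - / b) * (m * m) <= 2 * Rabs (a - b).
Proof.
  intros Hm Ha Hb.
  replace (/ a - / b) with ((b - a) * / (a * b)) by (field; lra).
  rewrite Rabs_mult, Rabs_minus_sym, (Rabs_pos_eq (/ (a * b)))
    by (apply Rlt_le, Rinv_0_lt_compat; nra).
  pose proof (Rabs_pos (a - b)).
  apply Rmult_le_reg_r with (a * b); [nra|].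
  replace (Rabs (a - b) * / (a * b) * (m * m) * (a * b)) with (Rabs (a - b) * (m * m))
    by (field; nra).
  assert (Hab : m * m <= 2 * (a * b)) by nra.
  pose proof (Rmult_le_compat_l _ _ _ (Rabs_pos (a - b)) Hab). lra.
Qed.

Definition weight (k : nat) : R := / INR (S k).

Lemma weight_pos k : 0 < weight k.
Proof. apply Rinv_0_lt_compat, lt_0_INR; lia. Qed.

Lemma weight_le1 k : weight k <= 1.
Proof.
  rewrite <- Rinv_1. apply Rinv_le_contravar; [lra|].
  rewrite S_INR. pose proof (pos_INR k). lra.
Qed.

Lemma weight_le_inv K k : (0 < K)%nat -> (K <= k)%nat -> weight k <= / INR K.
Proof. intros HK Hk. apply Rinv_le_contravar; [apply lt_0_INR | apply le_INR]; lia. Qed.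

Section Alexandroff.

Variable O : nat -> (R -> R) -> Prop.
Hypothesis O_open : forall k, openC (O k).

Definition gap k f g := Rmin 1 (Rabs (/ radius (O k) f - / radius (O k) g)).

Definition gap_sup f g := Sup (fun r => exists k, r = gap k f g * weight k).

Definition alexandroff_dist f g := dsup f g + gap_sup f g.

Lemma gap_bounds k f g : 0 <= gap k f g <= 1.
Proof.
  unfold gap. split; [apply Rmin_glb; [lra | apply Rabs_pos] | apply Rmin_l].
Qed.

Lemma gap_weight_bounds k f g : 0 <= gap k f g * weight k <= weight k.
Proof.
  pose proof (gap_bounds k f g). pose proof (weight_pos k).
  split; [apply Rmult_le_pos; lra|].
  rewrite <- (Rmult_1_l (weight k)) at 2. apply Rmult_le_compat_r; lra.
Qed.

Lemma gap_sym k f g : gap k f g = gap k g f.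
Proof. unfold gap. rewrite Rabs_minus_sym. reflexivity. Qed.

Lemma gap_triangle k f g h : gap k f h <= gap k f g + gap k g h.
Proof.
  unfold gap.
  set (a := / radius (O k) f). set (b := / radius (O k) g). set (c := / radius (O k) h).
  pose proof (Rdist_tri a c b). pose proof (Rabs_pos (a - b)). pose proof (Rabs_pos (b - c)).
  unfold Rdist in *. unfold Rmin; repeat destruct (Rle_dec _ _); lra.
Qed.

Lemma gap_le_dsup k f g m : inC f -> inC g -> 0 < m -> m <= radius (O k) f ->
  dsup f g <= m / 2 -> gap k f g * (m * m) <= 2 * dsup f g.
Proof.
  intros Hf Hg Hm Hmf Hfg.
  pose proof (radius_lipschitz (O k) f g Hf Hg).
  pose proof (radius_lipschitz (O k) g f Hg Hf) as Hgf. rewrite (dsup_sym g f) in Hgf by auto.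
  apply Rle_trans with (Rabs (/ radius (O k) f - / radius (O k) g) * (m * m)).
  - apply Rmult_le_compat_r; [nra | apply Rmin_r].
  - apply Rle_trans with (2 * Rabs (radius (O k) f - radius (O k) g)).
    + apply Rabs_inv_sub_le; lra.
    + apply Rmult_le_compat_l; [lra|]. apply Rabs_le_between. lra.
Qed.

Lemma gap_sup_ub f g k : gap k f g * weight k <= gap_sup f g.
Proof.
  apply Sup_ub with 1; [|eauto].
  intros r [j ->]. pose proof (gap_weight_bounds j f g). pose proof (weight_le1 j). lra.
Qed.

Lemma gap_sup_le f g B : (forall k, gap k f g * weight k <= B) -> gap_sup f g <= B.
Proof.
  intros H. apply Sup_le; [exists (gap 0 f g * weight 0); eauto|]. intros r [k ->]; auto.
Qed.

Lemma gap_sup_nonneg f g : 0 <= gap_sup f g.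
Proof.
  apply Rle_trans with (gap 0 f g * weight 0); [apply gap_weight_bounds | apply gap_sup_ub].
Qed.

Lemma gap_sup_sym f g : gap_sup f g = gap_sup g f.
Proof. apply Rle_antisym; apply gap_sup_le; intros k; rewrite gap_sym; apply gap_sup_ub. Qed.

Lemma gap_sup_triangle f g h : gap_sup f h <= gap_sup f g + gap_sup g h.
Proof.
  apply gap_sup_le. intros k.
  pose proof (gap_sup_ub f g k). pose proof (gap_sup_ub g h k).
  pose proof (Rmult_le_compat_r _ _ _ (Rlt_le _ _ (weight_pos k)) (gap_triangle k f g h)).
  lra.
Qed.

Lemma gap_sup_eq0 f g : inC f -> inC g -> dsup f g = 0 -> gap_sup f g = 0.
Proof.
  intros Hf Hg Hfg. apply Rle_antisym; [|apply gap_sup_nonneg].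
  apply gap_sup_le. intros k.
  pose proof (radius_lipschitz (O k) f g Hf Hg).
  pose proof (radius_lipschitz (O k) g f Hg Hf) as Hgf. rewrite (dsup_sym g f) in Hgf by auto.
  unfold gap. replace (radius (O k) g) with (radius (O k) f) by lra.
  rewrite Rminus_diag, Rabs_R0, Rmin_right by lra. lra.
Qed.

Lemma alexandroff_dist_sym f g : inC f -> inC g -> alexandroff_dist f g = alexandroff_dist g f.
Proof.
  intros Hf Hg. unfold alexandroff_dist. rewrite dsup_sym, gap_sup_sym by auto. reflexivity.
Qed.

Lemma radius_min_pos f : inC f -> (forall k, O k f) ->
  forall K, exists m, 0 < m /\ forall k, (k < K)%nat -> m <= radius (O k) f.
Proof.
  intros Hf HO. induction K as [|K [m [Hm HK]]].
  - exists 1. split; [lra | intros; lia].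
  - exists (Rmin m (radius (O K) f)).
    split; [apply Rmin_pos; auto; apply radius_pos; auto|].
    intros k Hk. destruct (Nat.eq_dec k K) as [->|Hne]; [apply Rmin_r|].
    apply Rle_trans with m; [apply Rmin_l | apply HK; lia].
Qed.

Lemma gap_sup_small f : inC f -> (forall k, O k f) -> forall eps, 0 < eps ->
  exists del, 0 < del /\ forall g, inC g -> dsup f g < del -> gap_sup f g <= eps.
Proof.
  intros Hf HO eps He.
  destruct (archimed_cor1 eps He) as [K [HK HK0]].
  destruct (radius_min_pos f Hf HO K) as [m [Hm Hmin]].
  exists (Rmin (m / 2) (eps * (m * m) / 2)).
  split; [apply Rmin_pos; [lra | pose proof (Rmult_lt_0_compat _ _ Hm Hm); nra]|].
  intros g Hg Hfg. pose proof (Rmin_l (m / 2) (eps * (m * m) / 2)).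
  pose proof (Rmin_r (m / 2) (eps * (m * m) / 2)).
  apply gap_sup_le. intros k. pose proof (gap_weight_bounds k f g).
  destruct (Nat.lt_ge_cases k K) as [Hk|Hk].
  - pose proof (gap_le_dsup k f g m Hf Hg Hm (Hmin k Hk) ltac:(lra)).
    assert (gap k f g <= eps) by (apply Rmult_le_reg_r with (m * m); nra).
    pose proof (weight_le1 k). pose proof (gap_bounds k f g). nra.
  - pose proof (weight_le_inv K k HK0 Hk). lra.
Qed.

Lemma alexandroff_dist_small f : inC f -> (forall k, O k f) -> forall eps, 0 < eps ->
  exists del, 0 < del /\ forall g, inC g -> dsup f g < del -> alexandroff_dist f g < eps.
Proof.
  intros Hf HO eps He.
  destruct (gap_sup_small f Hf HO (eps / 2)) as [del [Hdel Hsmall]]; [lra|].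
  exists (Rmin del (eps / 2)). split; [apply Rmin_pos; lra|].
  intros g Hg Hfg. pose proof (Rmin_l del (eps / 2)). pose proof (Rmin_r del (eps / 2)).
  pose proof (Hsmall g Hg ltac:(lra)). unfold alexandroff_dist. lra.
Qed.

Lemma radius_cauchy_bounded_below u k : (forall n, inC (u n)) -> (forall n, O k (u n)) ->
  cauchy alexandroff_dist u ->
  exists N m, 0 < m /\ forall n, (N <= n)%nat -> m <= radius (O k) (u n).
Proof.
  intros HuC HuO Hc.
  pose proof (weight_pos k) as Hw.
  destruct (Hc (weight k / 2)) as [N HN]; [lra|].
  pose proof (radius_pos (O k) (u N) (O_open k) (HuC N) (HuO N)) as HrN.
  set (M := / radius (O k) (u N) + 1 / 2).
  assert (HM : 0 < M) by (pose proof (Rinv_0_lt_compat _ HrN); unfold M; lra).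
  exists N, (/ M). split; [apply Rinv_0_lt_compat; exact HM|].
  intros n Hn.
  assert (Hgap : gap k (u n) (u N) < 1 / 2).
  { pose proof (HN n N Hn (le_n N)). pose proof (gap_sup_ub (u n) (u N) k).
    pose proof (dsup_nonneg (u n) (u N) (HuC n) (HuC N)). unfold alexandroff_dist in *.
    apply Rmult_lt_reg_r with (weight k); lra. }
  assert (Hinv : / radius (O k) (u n) <= M).
  { unfold gap, Rmin in Hgap. destruct (Rle_dec _ _); [lra|].
    apply Rabs_lt_between in Hgap. unfold M. lra. }
  pose proof (radius_pos (O k) (u n) (O_open k) (HuC n) (HuO n)).
  rewrite <- (Rinv_inv (radius (O k) (u n))).
  apply Rinv_le_contravar; [apply Rinv_0_lt_compat|]; auto.
Qed.

Lemma dsup_le_alexandroff_dist f g : dsup f g <= alexandroff_dist f g.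
Proof. pose proof (gap_sup_nonneg f g). unfold alexandroff_dist. lra. Qed.

Lemma alexandroff_cauchy_converges u : (forall n, inC (u n)) -> (forall n k, O k (u n)) ->
  cauchy alexandroff_dist u ->
  exists g, inC g /\ (forall k, O k g) /\ converges alexandroff_dist u g.
Proof.
  intros HuC HuO Hc.
  destruct (C_complete u HuC) as [g [Hg Hcv]].
  { intros eps He. destruct (Hc eps He) as [N HN]. exists N. intros m n Hm Hn.
    eapply Rle_lt_trans; [apply dsup_le_alexandroff_dist | apply HN]; auto. }
  assert (HOg : forall k, O k g).
  { intros k.
    destruct (radius_cauchy_bounded_below u k HuC (fun n => HuO n k) Hc) as [N [m [Hm HN]]].
    exact (radius_cv_unif_mem (O k) u g N m Hg HuC Hcv Hm HN). }
  exists g. split; [exact Hg | split; [exact HOg|]].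
  intros eps He. destruct (alexandroff_dist_small g Hg HOg eps He) as [del [Hdel Hsmall]].
  destruct (cv_unif_converges_dsup u g Hcv del Hdel) as [N HN].
  exists N. intros n Hn. rewrite alexandroff_dist_sym by auto.
  apply Hsmall; auto. rewrite dsup_sym; auto.
Qed.

Lemma Gdelta_completely_metrizable S :
  (forall f, S f <-> inC f /\ forall k, O k f) -> completely_metrizable S.
Proof.
  intros HS.
  assert (HSC : forall f, S f -> inC f) by (intros f Hf; apply HS; auto).
  assert (HSO : forall f k, S f -> O k f) by (intros f k Hf; apply HS; auto).
  exists alexandroff_dist. repeat match goal with |- _ /\ _ => split end.
  - intros f g Hf Hg. pose proof (dsup_nonneg f g (HSC f Hf) (HSC g Hg)).
    pose proof (dsup_le_alexandroff_dist f g). lra.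
  - intros f g Hf Hg. rewrite <- (dsup_eq0 f g (HSC f Hf) (HSC g Hg)). split.
    + intros Hd. pose proof (dsup_nonneg f g (HSC f Hf) (HSC g Hg)).
      pose proof (dsup_le_alexandroff_dist f g). lra.
    + intros Hd. unfold alexandroff_dist. rewrite gap_sup_eq0, Hd by auto. lra.
  - intros f g Hf Hg. apply alexandroff_dist_sym; auto.
  - intros f g h Hf Hg Hh. unfold alexandroff_dist.
    pose proof (dsup_triangle f g h (HSC f Hf) (HSC g Hg) (HSC h Hh)).
    pose proof (gap_sup_triangle f g h). lra.
  - intros f Hf eps He.
    destruct (alexandroff_dist_small f (HSC f Hf) (fun k => HSO f k Hf) eps He)
      as [del [Hdel Hsmall]].
    exists (del / 2). split; [lra|]. intros g Hg Hfg.
    apply Hsmall; auto. pose proof (dsup_le _ _ _ Hfg). lra.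
  - intros f Hf eps He. exists eps. split; auto. intros g Hg Hfg.
    apply sup_close_of_dsup_le; auto. pose proof (dsup_le_alexandroff_dist f g). lra.
  - intros u Hu Hc.
    destruct (alexandroff_cauchy_converges u (fun n => HSC _ (Hu n)) (fun n k => HSO _ k (Hu n)) Hc)
      as [g [Hg [HOg Hcv]]].
    exists g. split; [apply HS; auto | exact Hcv].
Qed.

End Alexandroff.

Definition transitive_on (U V : R -> Prop) (f : R -> R) : Prop :=
  (exists x, U x) -> (exists y, V y) ->
  exists n : nat, (1 <= n)%nat /\ exists x, U x /\ V (Nat.iter n f x).

Lemma iter_inI f n x : inC f -> inI x -> inI (Nat.iter n f x).
Proof. intros [Hf _] Hx. induction n; simpl; auto. Qed.

Lemma iter_continuous f x n : inC f -> inI x -> forall eps, 0 < eps ->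
  exists del, 0 < del /\ forall h, inC h -> sup_close f h del ->
    Rabs (Nat.iter n h x - Nat.iter n f x) < eps.
Proof.
  intros Hf Hx. induction n as [|n IH]; intros eps He.
  - exists 1. split; [lra|]. intros h _ _. simpl. rewrite Rminus_diag, Rabs_R0. exact He.
  - set (y := Nat.iter n f x).
    destruct (proj2 Hf y (iter_inI f n x Hf Hx) (eps / 2)) as [eta [Heta Hcont]]; [lra|].
    destruct (IH eta Heta) as [del [Hdel Hiter]].
    exists (Rmin del (eps / 2)). split; [apply Rmin_pos; lra|].
    intros h Hh Hfh. simpl. fold y. set (z := Nat.iter n h x).
    assert (Hz : inI z) by (apply iter_inI; auto).
    assert (Hzy : Rabs (z - y) < eta).
    { apply Hiter; auto. intros t Ht. apply Rle_trans with (Rmin del (eps / 2));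
      [apply Hfh; auto | apply Rmin_l]. }
    pose proof (Hcont z Hz Hzy) as Hfz. pose proof (Hfh z Hz) as Hhz.
    pose proof (Rmin_r del (eps / 2)).
    apply Rabs_lt_between in Hfz. apply Rabs_le_between in Hhz. apply Rabs_lt_between. lra.
Qed.

Lemma transitive_on_open U V : (forall x, U x -> inI x) -> openI V -> openC (transitive_on U V).
Proof.
  intros HU [_ HV] f Hf Hfo.
  destruct (classic ((exists x, U x) /\ (exists y, V y))) as [[HUne HVne]|Hempty].
  - destruct (Hfo HUne HVne) as [n [Hn [x [Hx HxV]]]].
    destruct (HV _ HxV) as [s [Hs Hball]].
    destruct (iter_continuous f x n Hf (HU x Hx) s Hs) as [del [Hdel Hiter]].
    exists del. split; auto. intros h Hh Hfh _ _.
    exists n. split; auto. exists x. split; auto.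
    apply Hball; [apply iter_inI; auto|].
    apply Hiter; auto. apply sup_close_of_dsup_le; auto; lra.
  - exists 1. split; [lra|]. intros h _ _ HUne HVne. tauto.
Qed.

Definition basic_ball (a : nat * nat) (y : R) : Prop :=
  inI y /\ Rabs (y - INR (fst a) / INR (S (snd a))) < / INR (S (snd a)).

Lemma basic_ball_open a : openI (basic_ball a).
Proof.
  split; [intros x [Hx _]; exact Hx|].
  intros x [Hx Hc]. set (c := INR (fst a) / INR (S (snd a))) in *.
  exists (/ INR (S (snd a)) - Rabs (x - c)). split; [lra|].
  intros y Hy Hyx. split; auto. fold c.
  pose proof (Rdist_tri y c x). unfold Rdist in *. lra.
Qed.

Lemma basic_ball_refines U x : openI U -> U x ->
  exists a, basic_ball a x /\ forall y, basic_ball a y -> U y.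
Proof.
  intros [HUI HUo] Hx. destruct (HUo x Hx) as [r [Hr Hball]].
  destruct (archimed_cor1 (r / 2)) as [N [HN HN0]]; [lra|].
  assert (HxI := HUI x Hx).
  assert (HNpos : 0 < INR N) by (apply lt_0_INR; exact HN0).
  destruct (nfloor_ex (x * INR N)) as [p Hp]; [apply Rmult_le_pos; [apply HxI | lra]|].
  exists (p, pred N). unfold basic_ball; simpl fst; simpl snd.
  rewrite Nat.succ_pred_pos by exact HN0.
  assert (Hc : 0 <= x - INR p / INR N < / INR N).
  { replace (x - INR p / INR N) with ((x * INR N - INR p) * / INR N) by (field; lra).
    pose proof (Rinv_0_lt_compat _ HNpos). split; [apply Rmult_le_pos; lra|].
    rewrite <- (Rmult_1_l (/ INR N)) at 2. apply Rmult_lt_compat_r; lra. }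
  split.
  - split; auto. apply Rabs_lt_between. lra.
  - intros y [Hy Hyc]. apply Hball; auto.
    pose proof (Rdist_tri y x (INR p / INR N)). unfold Rdist in *.
    rewrite (Rabs_minus_sym (INR p / INR N)), (Rabs_pos_eq (x - INR p / INR N)) in H by lra.
    lra.
Qed.

Definition transitive_at (k : nat) : (R -> R) -> Prop :=
  transitive_on (basic_ball (of_nat (fst (of_nat k)))) (basic_ball (of_nat (snd (of_nat k)))).

Lemma transitive_at_open k : openC (transitive_at k).
Proof. apply transitive_on_open; [intros x [Hx _]; exact Hx | apply basic_ball_open]. Qed.

Lemma TI_iff_transitive_at f : TI f <-> inC f /\ forall k, transitive_at k f.
Proof.
  split; intros [Hf Ht]; split; auto.
  - intros k. unfold transitive_at, transitive_on. apply Ht; apply basic_ball_open.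
  - intros U V HU HV [x Hx] [y Hy].
    destruct (basic_ball_refines U x HU Hx) as [a [Ha HaU]].
    destruct (basic_ball_refines V y HV Hy) as [b [Hb HbV]].
    specialize (Ht (to_nat (to_nat a, to_nat b))).
    unfold transitive_at in Ht. rewrite cancel_of_to in Ht. simpl in Ht.
    rewrite !cancel_of_to in Ht.
    destruct (Ht (ex_intro _ x Ha) (ex_intro _ y Hb)) as [n [Hn [z [Hz Hzn]]]].
    exists n. split; auto. exists z. auto.
Qed.

Lemma TI_closure_closed : closedC TI_closure.
Proof.
  intros f Hf Happrox. split; auto. intros eps He.
  destruct (Happrox (eps / 2)) as [g [[_ Hg] Hfg]]; [lra|].
  destruct (Hg (eps / 2)) as [h [Hh Hgh]]; [lra|].
  exists h. split; auto.
  replace eps with (eps / 2 + eps / 2) by field. apply sup_close_triangle with g; auto.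
Qed.

Theorem theorem4 : completely_metrizable TI /\ completely_metrizable TI_closure.
Proof.
  split.
  - apply (Gdelta_completely_metrizable transitive_at transitive_at_open).
    exact TI_iff_transitive_at.
  - apply closed_completely_metrizable; [intros f [Hf _]; exact Hf | exact TI_closure_closed].
Qed.
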